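(* Let $(L,\Delta)$ be a differential field extending $k$, and let $R$ be a $\Delta$-subring of $L$ containing $k$. Suppose $e:R\to\mathcal D(L)$ is a $k$-linear homomorphism of $\Delta$-rings such that for every $i=0,1,\dots,t$ the map $\pi_i^L\circ e:R\to L$ is injective. Then $e$ extends uniquely to a homomorphism of $\Delta$-rings $\operatorname{Frac}(R)\to\mathcal D(L)$ (where $\operatorname{Frac}(R)\subseteq L$ carries the induced derivations).
   Context: Fix a field $k$ of characteristic zero, a finite-dimensional commutative $k$-algebra $B$ such that $B/\mathfrak n=k$ for every maximal ideal $\mathfrak n$ of $B$, a $k$-algebra homomorphism $\pi:B\to k$, and a $k$-basis $(\epsilon_0,\dots,\epsilon_\ell)$ of $B$ with $\pi(\epsilon_0)=1$, $\pi(\epsilon_i)=0$ for $i\neq0$. $\Delta=\{\delta_1,\dots,\delta_m\}$ denotes commuting $k$-linear derivations. For a $k$-algebra $R$, $\mathcal D(R):=B\otimes_kR$; if $R$ has derivations $\Delta$, $\mathcal D(R)$ is a $\Delta$-ring via $\delta_j(b\otimes r)=b\otimes\delta_j(r)$. Write $B=\prod_{i=0}^tB_i$ as a product of local $k$-algebras, let $\pi_i:B\to k$ be the projection onto $B_i$ followed by the residue map $B_i\to k$ (indexed so $\pi_0=\pi$), and let $\pi_i^R:\mathcal D(R)\to R$ be its base change to $R$. *)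

From HB Require Import structures.
From mathcomp Require Import all_boot all_order all_algebra all_field.
Set Implicit Arguments. Unset Strict Implicit. Unset Printing Implicit Defensive.
Import GRing.Theory.
Local Open Scope ring_scope.

(* D(L) = B (x)_k L is represented via the basis as
   (l+1)-tuples of coordinates in L: the element sum_m eps_m (x) x_m. *)

Section Defs.
Variables (k : fieldType) (B : falgType k).

Definition is_kalg_hom (phi : B -> k) : Prop :=
  [/\ forall x y, phi (x + y) = phi x + phi y,
      forall x y, phi (x * y) = phi x * phi y,
      phi 1 = 1 &
      forall (c : k) x, phi (c *: x) = c * phi x].

Definition is_ideal (I : B -> Prop) : Prop :=
  [/\ I 0, (forall x y, I x -> I y -> I (x + y)) &
      forall b x, I x -> I (b * x)].

Definition is_maximal_ideal (I : B -> Prop) : Prop :=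
  [/\ is_ideal I, ~ I 1 &
      forall J : B -> Prop, is_ideal J -> (forall x, I x -> J x) ->
        (forall x, J x -> I x) \/ J 1].

(* B / n = k : every class modulo n contains a scalar *)
Definition residue_is_base (I : B -> Prop) : Prop :=
  forall b : B, exists c : k, I (b - c%:A).

Variables (l : nat) (eps : l.+1.-tuple B) (L : fieldType) (f : {rmorphism k -> L}).

Definition DL := {ffun 'I_l.+1 -> L}.

Definition dadd (x y : DL) : DL := [ffun m => x m + y m].
Definition dmul (x y : DL) : DL :=
  [ffun m => \sum_(i < l.+1) \sum_(j < l.+1)
               f (coord eps m (eps`_i * eps`_j)) * x i * y j].
Definition done : DL := [ffun m => f (coord eps m 1)].
Definition dscale (c : k) (x : DL) : DL := [ffun m => f c * x m].
Definition dmap (d : L -> L) (x : DL) : DL := [ffun m => d (x m)].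

Definition baseChange (phi : B -> k) (x : DL) : L :=
  \sum_(m < l.+1) f (phi eps`_m) * x m.

Definition is_kderivation (d : L -> L) : Prop :=
  [/\ forall x y, d (x + y) = d x + d y,
      forall x y, d (x * y) = d x * y + x * d y &
      forall (c : k) x, d (f c * x) = f c * d x].

Variable (nd : nat) (delta : 'I_nd -> L -> L).

Definition is_delta_subring_k (R : L -> Prop) : Prop :=
  [/\ forall x y, R x -> R y -> R (x - y),
      forall x y, R x -> R y -> R (x * y),
      R 1,
      forall c : k, R (f c) &
      forall j x, R x -> R (delta j x)].

Definition frac_in (R : L -> Prop) (x : L) : Prop :=
  exists a b, [/\ R a, R b, b != 0 & x = a / b].

Definition is_delta_hom_on (S : L -> Prop) (e : L -> DL) : Prop :=
  [/\ forall x y, S x -> S y -> e (x + y) = dadd (e x) (e y),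
      forall x y, S x -> S y -> e (x * y) = dmul (e x) (e y),
      e 1 = done &
      forall j x, S x -> e (delta j x) = dmap (delta j) (e x)].

Definition is_klinear_on (S : L -> Prop) (e : L -> DL) : Prop :=
  forall (c : k) x, S x -> e (f c * x) = dscale c (e x).

End Defs.

From HB Require Import structures.
From mathcomp Require Import all_boot all_order all_algebra all_field ring.
From Stdlib Require Import Classical ClassicalEpsilon.
Set Implicit Arguments. Unset Strict Implicit. Unset Printing Implicit Defensive.
Import GRing.Theory.
Local Open Scope ring_scope.

(* For y in D(L) = B (x)_k L, let [regmx y] be the matrix of multiplication by y; it commutes
   with the matrices [actmx b] through which B acts on D(L). If y is not a unit, the kernel of
   [regmx y] is a nonzero B-stable subspace, and a minimal nonzero B-stable subspace W inside it
   has a prime, hence maximal, annihilator in the finite-dimensional algebra B. Its residue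
   field is k, so B acts on W through a k-algebra map phi : B -> k, and y W = 0 then forces
   phi^L(y) = 0. Injectivity of every phi^L o e therefore makes e(b) a unit of D(L) for each
   nonzero b in R, so e(a/b) := e(a) e(b)^-1 is the only possible multiplicative extension; it
   is well defined and additive, and commutes with the derivations by the quotient rule. *)

(** * Ideals of a finite-dimensional commutative algebra *)

Lemma powers_dependent (k : fieldType) (B : falgType k) (b : B) : exists2 c : nat -> k,
  exists2 i, (i < (\dim {:B}).+1)%N & c i != 0 &
  \sum_(i < (\dim {:B}).+1) c i *: b ^+ i = 0.
Proof.
set n := (\dim {:B}).+1; pose X := [tuple b ^+ i | i < n].
have nfreeX : ~~ free X.
  apply/negP => /eqP freeX; have := dimvS (subvf <<X>>%VS).
  by rewrite freeX size_tuple ltnn.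
have [c [Xc0 [i ci]]] : exists c : 'I_n -> k,
    \sum_i c i *: X`_i = 0 /\ exists i, c i != 0.
  apply: NNPP => noc; move/freeP: nfreeX; apply=> c Xc0 i.
  by apply/eqP/negPn/negP => ci; apply: noc; exists c; split; last exists i.
exists (fun j => if (j < n)%N then c (inord j) else 0).
  by exists i; rewrite ?ltn_ord // inord_val.
rewrite -[RHS]Xc0; apply: eq_bigr => j _.
by rewrite ltn_ord inord_val nth_mktuple.
Qed.

Section IdealsOfFiniteAlgebra.
Variables (k : fieldType) (B : falgType k).
Hypothesis HBcomm : forall x y : B, x * y = y * x.
Variable I : B -> Prop.
Hypotheses (HI : is_ideal I) (I1 : ~ I 1).

Lemma ideal_scale c b : I b -> I (c *: b).
Proof. by case: HI => _ _ IM Ib; rewrite -mulr_algl; apply: IM. Qed.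

Lemma ideal_sub b c : I b -> I c -> I (b - c).
Proof.
by case: HI => _ ID _ Ib Ic; rewrite -scaleN1r; apply: ID => //; apply: ideal_scale.
Qed.

Lemma ideal_scalar_eq0 a : I a%:A -> a = 0.
Proof.
move=> Ia; apply/eqP/negPn/negP => a0; apply: I1.
have -> : (1 : B) = a^-1 *: a%:A by rewrite scalerA mulVf // scale1r.
exact: ideal_scale.
Qed.

Lemma residue_kalg_hom : residue_is_base I ->
  exists2 phi : B -> k, is_kalg_hom phi & forall b, I (b - (phi b)%:A).
Proof.
move=> Ires; have [phi phiP] : exists phi : B -> k, forall b, I (b - (phi b)%:A).
  exists (fun b => proj1_sig (constructive_indefinite_description _ (Ires b))).
  by move=> b; case: constructive_indefinite_description.
have phi_eq b a : I (b - a%:A) -> phi b = a.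
  move=> Iba; apply/eqP; rewrite -subr_eq0; apply/eqP/ideal_scalar_eq0.
  have -> : (phi b - a)%:A = (b - a%:A) - (b - (phi b)%:A).
    by rewrite scalerBl opprB [RHS]addrC addrA subrK.
  exact: ideal_sub.
case: HI => I0 ID IM; exists phi => //; split.
- move=> a b; apply: phi_eq; rewrite scalerDl opprD addrACA; exact: ID.
- move=> a b; apply: phi_eq.
  have -> : a * b - (phi a * phi b)%:A =
            b * (a - (phi a)%:A) + (phi a)%:A * (b - (phi b)%:A).
    rewrite mulrBr mulrBr !mulr_algl scalerA -scalerAr mulr1 addrA subrK.
    by rewrite HBcomm.
  by apply: ID; apply: IM.
- by apply: phi_eq; rewrite scale1r subrr.
- by move=> c a; apply: phi_eq; rewrite -scalerA -scalerBr; apply: ideal_scale.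
Qed.

Hypothesis Iprime : forall b c, I (b * c) -> ~ I b -> I c.

Lemma inv_mod_prime_of_relation b : ~ I b -> forall m (c : nat -> k),
  (exists2 i, (i < m)%N & c i != 0) -> I (\sum_(i < m) c i *: b ^+ i) ->
  exists d, I (b * d - 1).
Proof.
move=> Ib; elim=> [|m IHm] c [i lt_im ci] //; rewrite big_ord_recl /=.
set S := \sum_(i < m) c i.+1 *: b ^+ i.
have -> : \sum_(i < m) c (lift ord0 i) *: b ^+ (lift ord0 i) = b * S.
  by rewrite mulr_sumr; apply: eq_bigr => j _; rewrite lift0 exprS scalerAr.
have [c0 | c0] := eqVneq (c 0%N) 0.
  rewrite c0 scale0r add0r => /Iprime /(_ Ib) IS.
  case: i lt_im ci => [|i] lt_im ci; first by rewrite c0 eqxx in ci.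
  by apply: (IHm (fun j => c j.+1)) => //; exists i.
move=> Irel; exists (- (c 0%N)^-1 *: S).
have -> : b * (- (c 0%N)^-1 *: S) - 1 = - (c 0%N)^-1 *: (c 0%N *: b ^+ 0 + b * S).
  by rewrite expr0 scalerDr scalerA mulNr mulVf // scaleN1r -scalerAr addrC.
exact: ideal_scale.
Qed.

Lemma prime_ideal_maximal : is_maximal_ideal I.
Proof.
split=> // J [J0 JD JM] sIJ.
case: (classic (exists2 b, J b & ~ I b)) => [[b Jb Ib] | noJ]; last first.
  by left=> y Jy; apply: NNPP => Iy; apply: noJ; exists y.
right; have [c nz_c relb] := powers_dependent b.
have [|d Id] := inv_mod_prime_of_relation Ib nz_c; first by rewrite relb; case: HI.
have -> : (1 : B) = d * b - (b * d - 1) by rewrite HBcomm opprB addrCA subrr addr0.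
by rewrite -[- _]mulN1r; apply: JD; [apply: JM | apply: JM; apply: sIJ].
Qed.

End IdealsOfFiniteAlgebra.

(** * Extension to the field of fractions *)

Section DerivationQuotientRule.
Variables (S : comUnitRingType) (d : S -> S).
Hypothesis dM : forall x y, d (x * y) = d x * y + x * d y.

Lemma der1 : d 1 = 0.
Proof. by apply: (@addrI _ (d 1)); rewrite addr0 -{3}(mulr1 1) dM mulr1 mul1r. Qed.

Lemma der_div a u : u \is a GRing.unit -> d (a / u) = (d a * u - a * d u) / (u * u).
Proof.
move=> Uu; have dV : d u^-1 = - (d u * u^-1 * u^-1).
  have := der1; rewrite -(divrr Uu) dM => /eqP; rewrite addr_eq0 => /eqP dVu.
  by rewrite -[d u^-1](mulKr Uu) dVu; ring.
rewrite dM dV invrM //; have uVu := divrr Uu; rewrite -[d a * u^-1]mulr1 -uVu; ring.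
Qed.

End DerivationQuotientRule.

Section FracExtension.
Variables (L : fieldType) (S : comUnitRingType) (R : L -> Prop) (e : L -> S).
Hypotheses (RB : forall x y, R x -> R y -> R (x - y))
           (RM : forall x y, R x -> R y -> R (x * y)) (R1 : R 1).
Hypotheses (eD : forall x y, R x -> R y -> e (x + y) = e x + e y)
           (eM : forall x y, R x -> R y -> e (x * y) = e x * e y) (e1 : e 1 = 1).
Hypothesis eU : forall b, R b -> b != 0 -> e b \is a GRing.unit.

Lemma subring_add x y : R x -> R y -> R (x + y).
Proof.
have R0 : R 0 by rewrite -(subrr 1); apply: RB.
by move=> Rx Ry; rewrite -[y]opprK -[- y]sub0r; apply: RB => //; apply: RB.
Qed.

Lemma hom_sub x y : R x -> R y -> e (x - y) = e x - e y.
Proof. by move=> Rx Ry; have := eD (RB Rx Ry) Ry; rewrite subrK => ->; rewrite addrK. Qed.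

(* Well defined by [frac_extE]; the value outside Frac(R) is irrelevant. *)
Definition frac_ext (x : L) : S :=
  let p := epsilon (inhabits (0, 1))
             (fun p : L * L => [/\ R p.1, R p.2, p.2 != 0 & x = p.1 / p.2]) in
  e p.1 / e p.2.

Lemma frac_extE a b : R a -> R b -> b != 0 -> frac_ext (a / b) = e a / e b.
Proof.
move=> Ra Rb nzb.
pose Q (p : L * L) := [/\ R p.1, R p.2, p.2 != 0 & a / b = p.1 / p.2].
have : Q (epsilon (inhabits (0, 1)) Q) by apply: epsilon_spec; exists (a, b).
rewrite /frac_ext -/Q; case: (epsilon _ Q) => a' b' [/= Ra' Rb' nzb' Eab].
have [Ub Ub'] := (eU Rb nzb, eU Rb' nzb').
have cross : e a' * e b = e a * e b'.
  by rewrite -!eM //; congr e; apply/eqP; rewrite -eqr_div // Eab.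
by rewrite -[e a'](mulrK Ub) cross mulrAC mulrK.
Qed.

Lemma frac_ext_id x : R x -> frac_ext x = e x.
Proof. by move=> Rx; rewrite -{1}[x]divr1 frac_extE ?oner_neq0 // e1 divr1. Qed.

Lemma frac_ext_add x y : frac_in R x -> frac_in R y ->
  frac_ext (x + y) = frac_ext x + frac_ext y.
Proof.
move=> [a [b [Ra Rb nzb ->]]] [c [d [Rc Rd nzd ->]]].
have [Ub Ud] := (eU Rb nzb, eU Rd nzd).
have [[Rad Rcb] Rbd] := (RM Ra Rd, RM Rc Rb, RM Rb Rd).
have -> : a / b + c / d = (a * d + c * b) / (b * d) by field; apply/andP.
rewrite !frac_extE ?mulf_neq0 //; last exact: subring_add.
rewrite eD ?eM // invrM //.
by rewrite -[e a / e b]mulr1 -[e c / e d]mulr1 -{1}(divrr Ud) -(divrr Ub); ring.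
Qed.

Lemma frac_ext_mul x y : frac_in R x -> frac_in R y ->
  frac_ext (x * y) = frac_ext x * frac_ext y.
Proof.
move=> [a [b [Ra Rb nzb ->]]] [c [d [Rc Rd nzd ->]]].
have -> : a / b * (c / d) = (a * c) / (b * d) by field; apply/andP.
rewrite !frac_extE ?mulf_neq0 ?eM ?invrM ?eU //; first by ring.
all: exact: RM.
Qed.

Lemma frac_ext1 : frac_ext 1 = 1.
Proof. by rewrite frac_ext_id. Qed.

Lemma frac_ext_unique (E : L -> S) :
  (forall x y, frac_in R x -> frac_in R y -> E (x * y) = E x * E y) ->
  (forall x, R x -> E x = e x) -> forall x, frac_in R x -> E x = frac_ext x.
Proof.
move=> EM Ee x [a [b [Ra Rb nzb Ex]]]; have Ub := eU Rb nzb.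
have frac_R u : R u -> frac_in R u by move=> Ru; exists u, 1; rewrite divr1 oner_neq0.
have frac_x : frac_in R x by exists a, b.
have := EM x b frac_x (frac_R b Rb); rewrite {1}Ex divfK // (Ee a) // (Ee b) // => eab.
by rewrite [in RHS]Ex frac_extE // eab mulrK.
Qed.

Variables (dL : L -> L) (dS : S -> S).
Hypotheses (dLM : forall x y, dL (x * y) = dL x * y + x * dL y)
           (dSM : forall x y, dS (x * y) = dS x * y + x * dS y).
Hypotheses (Rd : forall x, R x -> R (dL x)) (ed : forall x, R x -> e (dL x) = dS (e x)).

Lemma frac_ext_der x : frac_in R x -> frac_ext (dL x) = dS (frac_ext x).
Proof.
move=> [a [b [Ra Rb nzb ->]]]; have [Rda Rdb] := (Rd Ra, Rd Rb).
have [[Rda_b Ra_db] Rbb] := (RM Rda Rb, RM Ra Rdb, RM Rb Rb).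
have Rnum : R (dL a * b - a * dL b) by exact: RB.
rewrite (der_div dLM) ?unitfE // !frac_extE ?mulf_neq0 //.
by rewrite hom_sub // !eM // !ed // (der_div dSM) ?eU.
Qed.

End FracExtension.

(** * The ring D(L) and its units *)

Lemma ex_minimal_submx (F : fieldType) (n : nat) (S : 'M[F]_n -> Prop) (W : 'M_n) :
  W != 0 -> S W -> exists W0 : 'M_n,
  [/\ (W0 <= W)%MS, W0 != 0, S W0 &
      forall W1 : 'M_n, (W1 <= W0)%MS -> W1 != 0 -> S W1 -> (W0 <= W1)%MS].
Proof.
elim: {W}(\rank W).+1 {-2}W (ltnSn (\rank W)) => // r IHr W rW nzW SW.
case: (classic (exists W1 : 'M_n, [/\ (W1 < W)%MS, W1 != 0 & S W1])).
  case=> W1 [ltW1 nzW1 SW1].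
  have [|W0 [sW0 nzW0 SW0 minW0]] := IHr W1 _ nzW1 SW1.
    by move: ltW1; rewrite ltmxErank => /andP[_ lt]; exact: leq_trans lt rW.
  by exists W0; split=> //; apply: submx_trans sW0 (ltmxW ltW1).
move=> noW1; exists W; split=> // W1 sW1 nzW1 SW1; apply/negPn/negP => nsW.
by apply: noW1; exists W1; rewrite ltmxE sW1.
Qed.

Section Dring.
Variables (k : fieldType) (B : falgType k) (l : nat) (eps : l.+1.-tuple B)
  (L : fieldType) (f : {rmorphism k -> L}).
Hypothesis Heps : basis_of fullv eps.
Hypothesis HBcomm : forall x y : B, x * y = y * x.
Hypothesis HBres : forall I : B -> Prop, is_maximal_ideal I -> residue_is_base I.

Lemma coord_eps (i j : 'I_l.+1) : coord eps j eps`_i = (i == j)%:R.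
Proof. exact: coord_free (basis_free Heps). Qed.

Lemma coord_expand (g : B -> k) (gD : forall x y, g (x + y) = g x + g y)
    (gZ : forall a x, g (a *: x) = a * g x) (u : B) :
  \sum_i f (coord eps i u) * f (g eps`_i) = f (g u).
Proof.
have g0 : g 0 = 0 by rewrite -(scale0r 0) gZ mul0r.
rewrite [in RHS](coord_basis Heps (memvf u)) (big_morph g gD g0) rmorph_sum.
by apply: eq_bigr => i _; rewrite gZ rmorphM.
Qed.

Lemma coord_mulr_expand (j : 'I_l.+1) (w u : B) :
  \sum_i f (coord eps i u) * f (coord eps j (eps`_i * w)) = f (coord eps j (u * w)).
Proof.
apply: (coord_expand (g := fun x => coord eps j (x * w))) => [x y|a x].
  by rewrite mulrDl linearD.
by rewrite -scalerAl linearZ.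
Qed.

Definition Dring : Type := DL l L.
HB.instance Definition _ := GRing.Zmodule.on Dring.

Definition mulc (i m j : 'I_l.+1) := f (coord eps j (eps`_i * eps`_m)).

Lemma dmulE (x y : Dring) j :
  dmul eps f x y j = \sum_i \sum_m mulc i m j * x i * y m.
Proof. by rewrite ffunE. Qed.

Lemma dmulC (x y : Dring) : dmul eps f x y = dmul eps f y x.
Proof.
apply/ffunP=> j; rewrite !dmulE exchange_big; apply: eq_bigr => i _.
by apply: eq_bigr => m _; rewrite /mulc HBcomm; ring.
Qed.

Lemma dmul1 (y : Dring) : dmul eps f (done eps f) y = y.
Proof.
apply/ffunP=> j; rewrite dmulE exchange_big /=.
have inner m : \sum_i mulc i m j * done eps f i * y m = (m == j)%:R * y m.
  rewrite -mulr_suml; congr (_ * _).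
  under eq_bigr do rewrite ffunE mulrC.
  by rewrite coord_mulr_expand mul1r coord_eps rmorph_nat.
under eq_bigr do rewrite inner.
by rewrite (bigD1 j) //= eqxx mul1r big1 ?addr0 // => m /negPf ->; rewrite mul0r.
Qed.

Lemma dmulDl (x y z : Dring) :
  dmul eps f (x + y) z = dmul eps f x z + dmul eps f y z.
Proof.
apply/ffunP=> j; rewrite !ffunE -big_split; apply: eq_bigr => i _.
by rewrite -big_split; apply: eq_bigr => m _; rewrite !ffunE mulrDr mulrDl.
Qed.

Lemma dmul_assoc_sum (x y z : Dring) j :
  dmul eps f (dmul eps f x y) z j =
  \sum_(i < l.+1) \sum_(m < l.+1) \sum_(q < l.+1)
    f (coord eps j (eps`_i * eps`_m * eps`_q)) * x i * y m * z q.
Proof.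
have expand p q : mulc p q j * dmul eps f x y p * z q =
    \sum_(i < l.+1) \sum_(m < l.+1) (mulc i m p * mulc p q j) * x i * y m * z q.
  rewrite dmulE mulr_sumr mulr_suml; apply: eq_bigr => i _.
  by rewrite mulr_sumr mulr_suml; apply: eq_bigr => m _; ring.
rewrite dmulE; under eq_bigr do under eq_bigr do rewrite expand.
under eq_bigr => p _ do rewrite exchange_big.
under eq_bigr => p _ do under eq_bigr => i _ do rewrite exchange_big.
rewrite exchange_big; under eq_bigr => i _ do rewrite exchange_big.
under eq_bigr => i _ do under eq_bigr => m _ do rewrite exchange_big.
apply: eq_bigr => i _; apply: eq_bigr => m _; apply: eq_bigr => q _.
by rewrite -!mulr_suml /mulc coord_mulr_expand.
Qed.

Lemma dmulA (x y z : Dring) :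
  dmul eps f x (dmul eps f y z) = dmul eps f (dmul eps f x y) z.
Proof.
apply/ffunP=> j; rewrite dmulC !dmul_assoc_sum.
under eq_bigr do rewrite exchange_big; rewrite exchange_big.
apply: eq_bigr => q _; apply: eq_bigr => i _; apply: eq_bigr => m _.
by rewrite -[eps`_q * _ * _]mulrA [eps`_q * _]HBcomm; ring.
Qed.

Lemma done_neq0 : done eps f != 0 :> Dring.
Proof.
apply/eqP => /ffunP one0; have /eqP := oner_neq0 B; apply.
rewrite (coord_basis Heps (memvf 1)) big1 // => i _.
by have := one0 i; rewrite !ffunE => /eqP; rewrite fmorph_eq0 => /eqP ->; rewrite scale0r.
Qed.

HB.instance Definition _ :=
  GRing.Zmodule_isComNzRing.Build Dring dmulA dmulC dmul1 dmulDl done_neq0.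

Lemma mulDringE (x y : Dring) : x * y = dmul eps f x y. Proof. by []. Qed.

Definition rowv (v : Dring) : 'rV[L]_l.+1 := \row_j v j.
Definition vrow (r : 'rV[L]_l.+1) : Dring := [ffun j => r 0 j].

Lemma rowvK : cancel rowv vrow.
Proof. by move=> v; apply/ffunP=> j; rewrite ffunE mxE. Qed.

Lemma vrowK : cancel vrow rowv.
Proof. by move=> r; apply/rowP=> j; rewrite !mxE ffunE. Qed.

Definition regmx (y : Dring) : 'M[L]_l.+1 := \matrix_(i, j) \sum_m mulc i m j * y m.

Lemma rowvM (v y : Dring) : rowv (v * y) = rowv v *m regmx y.
Proof.
apply/rowP=> j; rewrite !mxE mulDringE dmulE; apply: eq_bigr => i _.
by rewrite !mxE mulr_sumr; apply: eq_bigr => m _; ring.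
Qed.

Definition dbasis (i : 'I_l.+1) : Dring := [ffun j => (i == j)%:R].

Lemma rowv_dbasis (i : 'I_l.+1) : rowv (dbasis i) = delta_mx 0 i.
Proof. by apply/rowP=> j; rewrite !mxE ffunE eq_sym. Qed.

Lemma regmxE (y : Dring) (i : 'I_l.+1) :
  row i (regmx y) = rowv (dbasis i * y).
Proof. by rewrite rowvM rowv_dbasis -rowE. Qed.

Lemma regmxM (x y : Dring) : regmx (x * y) = regmx x *m regmx y.
Proof. by apply/row_matrixP=> i; rewrite row_mul !regmxE mulrA rowvM. Qed.

Lemma regmx1 : regmx 1 = 1%:M.
Proof. by apply/row_matrixP=> i; rewrite regmxE mulr1 rowv_dbasis rowE mulmx1. Qed.

Definition dunit : pred Dring := fun y => regmx y \in unitmx.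
Definition dinv (y : Dring) : Dring :=
  if dunit y then vrow (rowv 1 *m invmx (regmx y)) else y.

Lemma dmulVr : {in dunit, left_inverse 1 dinv *%R}.
Proof.
move=> y Uy; apply: (can_inj rowvK).
by rewrite rowvM /dinv [dunit y]Uy vrowK -mulmxA mulVmx // mulmx1.
Qed.

Lemma dunitPl (x y : Dring) : y * x = 1 -> dunit x.
Proof. by move/(congr1 regmx); rewrite regmxM regmx1 => /mulmx1_unit[]. Qed.

Lemma dinv_out : {in [predC dunit], dinv =1 id}.
Proof. by move=> y; rewrite inE /dinv => /negPf Uy; rewrite [dunit y]Uy. Qed.

HB.instance Definition _ :=
  GRing.ComNzRing_hasMulInverse.Build Dring dmulVr dunitPl dinv_out.

Lemma unitDringE (y : Dring) : (y \is a GRing.unit) = (regmx y \in unitmx).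
Proof. by []. Qed.

Lemma regmxC (x y : Dring) : regmx x *m regmx y = regmx y *m regmx x.
Proof. by rewrite -!regmxM mulrC. Qed.

Definition dlift (b : B) : Dring := [ffun j => f (coord eps j b)].

Definition actmx (b : B) := regmx (dlift b).

Lemma actmxE b (i j : 'I_l.+1) : actmx b i j = f (coord eps j (eps`_i * b)).
Proof.
rewrite mxE HBcomm -coord_mulr_expand; apply: eq_bigr => m _.
by rewrite ffunE /mulc HBcomm mulrC.
Qed.

Lemma dliftM b c : dlift (b * c) = dlift b * dlift c.
Proof.
apply: (can_inj rowvK); rewrite rowvM -/(actmx c); apply/rowP=> j.
rewrite !mxE ffunE -coord_mulr_expand; apply: eq_bigr => i _.
by rewrite actmxE !mxE ffunE.
Qed.

Lemma actmxM b c : actmx (b * c) = actmx b *m actmx c.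
Proof. by rewrite /actmx dliftM regmxM. Qed.

Lemma actmx1 : actmx 1 = 1%:M.
Proof. exact: regmx1. Qed.

Lemma actmxD b c : actmx (b + c) = actmx b + actmx c.
Proof. by apply/matrixP=> i j; rewrite [RHS]mxE !actmxE mulrDr linearD rmorphD. Qed.

Lemma actmxZ a b : actmx (a *: b) = f a *: actmx b.
Proof. by apply/matrixP=> i j; rewrite [RHS]mxE !actmxE -scalerAr linearZ rmorphM. Qed.

Lemma regmx_decomp (y : Dring) : regmx y = \sum_m y m *: actmx eps`_m.
Proof.
apply/matrixP=> i j; rewrite summxE mxE; apply: eq_bigr => m _.
by rewrite mxE actmxE mulrC.
Qed.
Definition act_stable (W : 'M[L]_l.+1) := forall b, (W *m actmx b <= W)%MS.

Lemma kermx_regmx_stable y : act_stable (kermx (regmx y)).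
Proof. by move=> b; apply/sub_kermxP; rewrite -mulmxA regmxC mulmxA mulmx_ker mul0mx. Qed.

Lemma stable_capmx_kermx W c : act_stable W -> act_stable (W :&: kermx (actmx c))%MS.
Proof.
move=> stW b; rewrite sub_capmx; apply/andP; split.
  by apply: submx_trans (stW b); apply: submxMr; apply: capmxSl.
apply/sub_kermxP; rewrite -mulmxA regmxC mulmxA.
by have /sub_kermxP -> := capmxSr W (kermx (actmx c)); rewrite mul0mx.
Qed.

Section MinimalStable.
Variable W : 'M[L]_l.+1.
Hypotheses (nzW : W != 0) (stW : act_stable W).
Hypothesis minW : forall W1, (W1 <= W)%MS -> W1 != 0 -> act_stable W1 -> (W <= W1)%MS.

Definition ann (b : B) : Prop := W *m actmx b = 0.

Lemma ann_ideal : is_ideal ann.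
Proof.
split=> [|b c|a b]; rewrite /ann.
- by rewrite -(scale0r 0) actmxZ rmorph0 scale0r mulmx0.
- by rewrite actmxD mulmxDr => -> ->; rewrite addr0.
- by rewrite actmxM regmxC mulmxA => ->; rewrite mul0mx.
Qed.

Lemma ann1 : ~ ann 1.
Proof. by rewrite /ann actmx1 mulmx1 => W0; move: nzW; rewrite W0 eqxx. Qed.

Lemma ann_prime b c : ann (b * c) -> ~ ann b -> ann c.
Proof.
rewrite /ann actmxM regmxC mulmxA => Wcb0 Wb; set W1 := (W :&: kermx (actmx b))%MS.
(* By minimality of W, the stable subspace W1 is either 0 or all of W. *)
have [W1_0 | nzW1] := eqVneq W1 0.
  apply/eqP; rewrite -submx0 -W1_0 sub_capmx stW.
  by apply/sub_kermxP.
case: Wb; apply/sub_kermxP; apply: submx_trans (capmxSr W _).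
exact: minW (capmxSl _ _) nzW1 (stable_capmx_kermx _ stW).
Qed.

Lemma minimal_stable_eigen :
  exists2 phi : B -> k, is_kalg_hom phi & forall b, W *m actmx b = f (phi b) *: W.
Proof.
have ann_max := prime_ideal_maximal HBcomm ann_ideal ann1 ann_prime.
have [phi phi_hom annP] := residue_kalg_hom HBcomm ann_ideal ann1 (HBres ann_max).
exists phi => // b; apply/eqP; rewrite -subr_eq0; apply/eqP.
have := annP b; rewrite /ann.
by rewrite -scaleNr actmxD actmxZ actmx1 mulmxDr -scalemxAr mulmx1 rmorphN scaleNr.
Qed.

End MinimalStable.

Lemma nonunit_kalg_hom (y : Dring) : y \isn't a GRing.unit ->
  exists2 phi : B -> k, is_kalg_hom phi & baseChange eps f phi y = 0.
Proof.
move=> Uy; have nzK : kermx (regmx y) != 0.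
  rewrite -mxrank_eq0 mxrank_ker subn_eq0 -ltnNge ltn_neqAle rank_leq_row andbT.
  by move: Uy; rewrite unitDringE -row_free_unit.
have [W [sWK nzW stW minW]] := ex_minimal_submx nzK (@kermx_regmx_stable y).
have [phi phi_hom Weig] := minimal_stable_eigen nzW stW minW.
exists phi => //; suff : baseChange eps f phi y *: W = 0.
  by move/eqP; rewrite scalemx_eq0 (negPf nzW) orbF => /eqP.
have /sub_kermxP := sWK; rewrite regmx_decomp mulmx_sumr => <-.
rewrite /baseChange scaler_suml; apply: eq_bigr => m _.
by rewrite -scalemxAr Weig scalerA mulrC.
Qed.

Lemma dmapM (d : L -> L) : is_kderivation f d ->
  forall x y : Dring, dmap d (x * y) = (dmap d x : Dring) * y + x * (dmap d y : Dring).
Proof.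
case=> dD dM dZ x y; have d0 : d 0 = 0 by apply: (@addrI _ (d 0)); rewrite -dD !addr0.
apply/ffunP=> j; rewrite [LHS]ffunE [RHS]ffunE !mulDringE !dmulE.
rewrite (big_morph d dD d0) -big_split; apply: eq_bigr => i _.
rewrite (big_morph d dD d0) -big_split; apply: eq_bigr => m _.
by rewrite -mulrA dZ dM !ffunE mulrDr !mulrA.
Qed.

Lemma is_delta_hom_onE (nd : nat) (delta : 'I_nd -> L -> L) (S : L -> Prop)
    (E : L -> Dring) :
  is_delta_hom_on eps f delta S E <->
  [/\ forall x y, S x -> S y -> E (x + y) = E x + E y,
      forall x y, S x -> S y -> E (x * y) = E x * E y,
      E 1 = 1 &
      forall j x, S x -> E (delta j x) = dmap (delta j) (E x)].
Proof. by []. Qed.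

Lemma delta_hom_frac_extension
    (nd : nat) (delta : 'I_nd -> L -> L) (Hder : forall j, is_kderivation f (delta j))
    (R : L -> Prop) (HR : is_delta_subring_k f delta R)
    (e : L -> Dring) (He : is_delta_hom_on eps f delta R e)
    (Hinj : forall phi : B -> k, is_kalg_hom phi -> forall x y, R x -> R y ->
       baseChange eps f phi (e x) = baseChange eps f phi (e y) -> x = y) :
  exists E : L -> DL l L,
    [/\ is_delta_hom_on eps f delta (frac_in R) E,
        forall x, R x -> E x = e x &
        forall E' : L -> DL l L, is_delta_hom_on eps f delta (frac_in R) E' ->
          (forall x, R x -> E' x = e x) -> forall x, frac_in R x -> E' x = E x].
Proof.
case: HR => RB RM R1 _ Rdelta; case/is_delta_hom_onE: He => eD eM e1 edelta.
have R0 : R 0 by rewrite -(subrr 1); apply: RB.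
have e0 : e 0 = 0 by rewrite -(subrr 1) (hom_sub RB eD) // subrr.
have eU b : R b -> b != 0 -> e b \is a GRing.unit.
  move=> Rb nzb; apply/negPn/negP => /nonunit_kalg_hom [phi phi_hom bc0].
  move/eqP: nzb; apply; apply: (Hinj _ phi_hom _ _ Rb R0).
  by rewrite bc0 e0 /baseChange big1 // => m _; rewrite ffunE mulr0.
exists (frac_ext (S := Dring) R e); split.
- apply/is_delta_hom_onE; split=> [x y Rx Ry | x y Rx Ry | | j x Rx].
  + exact: frac_ext_add.
  + exact: frac_ext_mul.
  + exact: frac_ext1.
  + have [_ dM _] := Hder j.
    by apply: frac_ext_der => //; [apply: dmapM | apply: Rdelta | apply: edelta].
- by move=> x Rx; apply: (frac_ext_id R1 eM e1 eU).
- by move=> E' /is_delta_hom_onE[_ E'M _ _] E'e; apply: (frac_ext_unique R1 eM eU).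
Qed.

End Dring.

Theorem lemma4p3
  (k : fieldType) (Hchar : [pchar k] =i pred0)
  (B : falgType k) (HBcomm : forall x y : B, x * y = y * x)
  (HBres : forall I : B -> Prop, is_maximal_ideal I -> residue_is_base I)
  (pi : B -> k) (Hpi : is_kalg_hom pi)
  (l : nat) (eps : l.+1.-tuple B) (Heps : basis_of fullv eps)
  (Hpi0 : pi eps`_0 = 1) (Hpii : forall i : 'I_l.+1, i != 0 :> nat -> pi eps`_i = 0)
  (nd : nat) (L : fieldType) (f : {rmorphism k -> L}) (delta : 'I_nd -> L -> L)
  (Hder : forall j, is_kderivation f (delta j))
  (Hcomm : forall i j x, delta i (delta j x) = delta j (delta i x))
  (R : L -> Prop) (HR : is_delta_subring_k f delta R)
  (e : L -> DL l L) (He : is_delta_hom_on eps f delta R e)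
  (Helin : is_klinear_on f R e)
  (Hinj : forall phi : B -> k, is_kalg_hom phi ->
     forall x y, R x -> R y -> baseChange eps f phi (e x) = baseChange eps f phi (e y) -> x = y) :
  exists E : L -> DL l L,
    [/\ is_delta_hom_on eps f delta (frac_in R) E,
        forall x, R x -> E x = e x &
        forall E' : L -> DL l L, is_delta_hom_on eps f delta (frac_in R) E' ->
          (forall x, R x -> E' x = e x) -> forall x, frac_in R x -> E' x = E x].
Proof.
exact: (delta_hom_frac_extension Heps HBcomm HBres Hder HR He Hinj).
Qed.
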